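(* Let $t\geq 2$ be an integer, $m=4t+2$, $n=2^m+1$ and $\delta_2=2^{4t-1}+\frac{2^{4t}-1}{5}$. If $x$ is an odd integer with $\delta_2+2\leq x\leq\delta_2+3\cdot 2^{4t-5}$, then $x$ is not a coset leader modulo $n$.
   Context: For $n=2^m+1$ and an integer $x$, the 2-cyclotomic coset of $x$ modulo $n$ is $C_x=\{x\cdot 2^{j} \bmod n : j\geq 0\}\subseteq\{0,1,\dots,n-1\}$. For $0\leq x\leq n-1$, ''$x$ is a coset leader'' means that $x$ is the smallest element of $C_x$. *)

From mathcomp Require Import all_boot.

Definition cyc_coset (n x : nat) : nat -> Prop :=
  fun y => exists j : nat, y = (x * 2 ^ j) %% n.

Definition coset_leader (n x : nat) : Prop :=
  x < n /\ forall y, cyc_coset n x y -> x <= y.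

Definition delta2 (t : nat) : nat := 2 ^ (4 * t - 1) + (2 ^ (4 * t) - 1) %/ 5.

From mathcomp Require Import all_boot.
From mathcomp Require Import zify.

(* Since 2^m = -1 mod n, multiplying by 2^(k m) maps a residue y to y or
   n - y.  If x is a coset leader with 7n/40 <= x < n/5, every residue
   y = ±x 2^(4i) of its coset with y <= n/5 is >= x, so 16y lies in
   [2.8n, 3.2n] and one of ±16y mod n is again <= n/5.  Iterating t times
   and multiplying once more by 4 gives 4y = ±x 2^m = ∓x mod n with
   x <= y <= n/5, which is impossible. *)

Lemma mul16_mod_window n y :
  0 < n -> 7 * n <= 40 * y -> 5 * y <= n ->
  5 * (16 * y %% n) <= n \/ 5 * (n - 16 * y %% n) <= n /\ 0 < 16 * y %% n.
Proof.
move=> n_gt0 lo hi; case: (leqP (3 * n) (16 * y)) => h16.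
- left; have -> : 16 * y = 3 * n + (16 * y - 3 * n) by lia.
  rewrite modnMDl modn_small; lia.
- right; have -> : 16 * y = 2 * n + (16 * y - 2 * n) by lia.
  rewrite modnMDl modn_small; lia.
Qed.

Section FermatModulus.

Variable m : nat.
Local Notation n := (2 ^ m + 1).

Lemma mul_pow2_mod y : 0 < y < n -> y * 2 ^ m %% n = n - y.
Proof.
move=> /andP[y_gt0 y_lt_n].
have -> : y * 2 ^ m = (y - 1) * n + (n - y) by nia.
by rewrite modnMDl modn_small; lia.
Qed.

Lemma mul_pow2_mulm_mod k y :
  0 < y < n -> y * 2 ^ (k * m) %% n = if odd k then n - y else y.
Proof.
move=> y_range; elim: k => [|k IHk].
  by rewrite mul0n expn0 muln1 modn_small //; lia.
rewrite mulSn addnC expnD mulnA -modnMml IHk /=.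
by case: (odd k) => /=; rewrite mul_pow2_mod; lia.
Qed.

End FermatModulus.

Section Window.

Variables t x : nat.
Local Notation m := (4 * t + 2).
Local Notation n := (2 ^ m + 1).

Hypothesis leader : forall j, x <= x * 2 ^ j %% n.
Hypothesis window_lo : 7 * n <= 40 * x.
Hypothesis window_hi : 5 * x < n.

Lemma small_residue_pow16 i : exists k, 5 * (x * 2 ^ (4 * i + k * m) %% n) <= n.
Proof.
elim: i => [|i [k small_c]].
  by exists 0; rewrite addn0 expn0 muln1 modn_small; lia.
set c := x * 2 ^ (4 * i + k * m) %% n in small_c.
have c_ge_x : x <= c by apply: leader.
have shift4 j :
    x * 2 ^ (4 * i.+1 + (k + j) * m) %% n = 16 * c %% n * 2 ^ (j * m) %% n.
  rewrite modnMml mulnAC modnMmr -[16]/(2 ^ 4) -expnD mulnCA -expnD.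
  by congr (x * 2 ^ _ %% n); lia.
have n_gt0 : 0 < n by rewrite addn1.
have c_window : 7 * n <= 40 * c by lia.
have [small16 | [small_opp16 pos16]] :=
  mul16_mod_window _ _ n_gt0 c_window small_c.
- by exists k; rewrite -[k]addn0 shift4 mul0n expn0 muln1 modn_mod.
- exists k.+1; rewrite -[k.+1]addn1 shift4 mul_pow2_mulm_mod ?ltn_pmod /=; lia.
Qed.

Lemma window_leader_absurd : False.
Proof.
have [k small_c] := small_residue_pow16 t.
set c := x * 2 ^ (4 * t + k * m) %% n in small_c.
have c_ge_x : x <= c by apply: leader.
have : 4 * c %% n = x * 2 ^ (k.+1 * m) %% n.
  rewrite modnMmr -[4]/(2 ^ 2) mulnCA -expnD.
  by congr (x * 2 ^ _ %% n); lia.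
rewrite modn_small ?mul_pow2_mulm_mod; try lia.
by case: odd; lia.
Qed.

End Window.

Lemma delta2_window t x :
  2 <= t -> delta2 t + 2 <= x <= delta2 t + 3 * 2 ^ (4 * t - 5) ->
  7 * (2 ^ (4 * t + 2) + 1) <= 40 * x /\ 5 * x < 2 ^ (4 * t + 2) + 1.
Proof.
rewrite /delta2 => t_ge2; set a := 4 * t - 5.
have -> : 4 * t - 1 = a + 4 by lia.
have -> : 4 * t + 2 = a + 7 by lia.
have -> : 4 * t = a + 5 by lia.
rewrite !expnD; set P := 2 ^ a.
have P_gt0 : 0 < P by rewrite expn_gt0.
have := divn_eq (P * 2 ^ 5 - 1) 5; have := ltn_pmod (P * 2 ^ 5 - 1) (isT : 0 < 5).
by move=> ? ? /andP[? ?]; split; lia.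
Qed.

Theorem lemma4p3 (t x : nat) :
  2 <= t ->
  odd x ->
  delta2 t + 2 <= x <= delta2 t + 3 * 2 ^ (4 * t - 5) ->
  ~ coset_leader (2 ^ (4 * t + 2) + 1) x.
Proof.
move=> t_ge2 _ x_range [_ least].
have [lo hi] := @delta2_window t x t_ge2 x_range.
apply: (@window_leader_absurd t x) => // j.
by apply: least; exists j.
Qed.
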